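(* Let $N\ge 2$, $\mathcal N=\{1,\dots,N\}$, $\mathcal F=\{(i,j): i<j,\ i,j\in\mathcal N\}$, $B\in\mathbb Z_{\ge0}$, $S_1,\dots,S_N\in\mathbb Z_{\ge 0}$, and let $\mathcal X\subset\mathbb Z_{\ge0}^{\mathcal F}$ be the set of integer vectors $x$ with $\sum_{(i,j)\in\mathcal F}x_{ij}\le B$ and $\sum_{j<i}x_{ji}+\sum_{j>i}x_{ij}\le S_i$ for all $i$. Let $p_{\mathrm{e2e}}\in[0,1]$ and $\Delta t>0$, and define the throughput region $$\Lambda_{\mathrm{EGS}}=\frac{p_{\mathrm{e2e}}}{\Delta t}\,\mathrm{co}(\mathcal X)=\Big\{\tfrac{p_{\mathrm{e2e}}}{\Delta t}\textstyle\sum_{x\in\mathcal X}\delta_x x:\ \sum_{x\in\mathcal X}\delta_x=1,\ \delta_x\ge 0\Big\}.$$ Then $$R^{\mathrm{sec}}_{\mathrm{EGS}}\triangleq\max_{\lambda\in\Lambda_{\mathrm{EGS}}}\sum_{(i,j)\in\mathcal F}\lambda_{ij}=\frac{p_{\mathrm{e2e}}}{\Delta t}\,\min\Big\{B,\ \Big\lfloor\tfrac12\sum_i S_i\Big\rfloor,\ \sum_i S_i-S_{\max}\Big\},$$ where $S_{\max}=\max_i S_i$.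
   Context: This models an all-photonic entanglement generation switch with $N$ clients, $B$ Bell-state analyzers, per-client multiplexing degrees $S_i$, per-slot end-to-end success probability $p_{\mathrm{e2e}}$ of a BSA assigned to a pair, and slot duration $\Delta t$; $\mathrm{co}(\cdot)$ denotes convex hull. *)

From mathcomp Require Import all_boot all_order all_algebra.
From mathcomp Require Import reals.
Set Implicit Arguments. Unset Strict Implicit. Unset Printing Implicit Defensive.
Import Order.TTheory GRing.Theory Num.Theory.
Local Open Scope ring_scope.

(* Clients are 'I_N (0-based); the pair set F = {(i,j) | i < j}.
   A schedule x assigns a nat to every ordered pair; entries outside F are
   required to be 0, so that X is a (finite) subset of Z_{>=0}^F. *)

Definition total_use N (x : {ffun 'I_N * 'I_N -> nat}) : nat :=
  (\sum_(i < N) \sum_(j < N | (i < j)%N) x (i, j))%N.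

Definition load N (x : {ffun 'I_N * 'I_N -> nat}) (i : 'I_N) : nat :=
  ((\sum_(j < N | (j < i)%N) x (j, i)) + (\sum_(j < N | (i < j)%N) x (i, j)))%N.

Definition feasible N (B : nat) (S : 'I_N -> nat) (x : {ffun 'I_N * 'I_N -> nat}) : Prop :=
  (forall i j : 'I_N, ~~ (i < j)%N -> x (i, j) = 0%N) /\
  (total_use x <= B)%N /\
  (forall i, (load x i <= S i)%N).

Definition in_Lambda (R : realType) N (B : nat) (S : 'I_N -> nat) (p dt : R)
    (lam : 'I_N -> 'I_N -> R) : Prop :=
  exists (s : seq (R * {ffun 'I_N * 'I_N -> nat})),
    (forall d, d \in s -> 0 <= d.1 /\ feasible B S d.2) /\
    \sum_(d <- s) d.1 = 1 /\
    (forall i j, lam i j = p / dt * \sum_(d <- s) d.1 * ((d.2 (i, j))%:R)).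

Definition sum_F (R : realType) N (lam : 'I_N -> 'I_N -> R) : R :=
  \sum_(i < N) \sum_(j < N | (i < j)%N) lam i j.

From mathcomp Require Import all_boot all_order all_algebra.
From mathcomp Require Import reals.
From mathcomp Require Import zify.
Import Order.TTheory GRing.Theory Num.Theory.

Set Implicit Arguments. Unset Strict Implicit. Unset Printing Implicit Defensive.

(* The objective is linear, so its maximum over co(X) is attained on X and it
   suffices to show that max_{x in X} total_use x = min {B, Ssum/2, Ssum - Smax}.
   Upper bound: each pair loads two clients, so 2 total_use x = sum_i load x i
   (handshake lemma); this gives total_use x <= Ssum/2, and, since client m is in
   at most total_use x pairs, also total_use x <= sum_{i <> m} S_i.
   Lower bound: while the demands allow it, greedily pair the two clients with
   the largest remaining capacities; this keeps both conditions
   2K <= Ssum and K + S_i <= Ssum invariant. *)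

Section Schedules.
Variable N : nat.
Local Notation schedule := {ffun 'I_N * 'I_N -> nat}.
Implicit Types x y : schedule.

Definition upper_triangular (x : schedule) :=
  forall i j : 'I_N, ~~ (i < j)%N -> x (i, j) = 0%N.

Definition sched_add (x y : schedule) : schedule := [ffun e => x e + y e]%N.

Definition sched_pair (a b : 'I_N) : schedule := [ffun e => nat_of_bool (e == (a, b))].

Lemma sum_eq_cond (P : pred 'I_N) b : (\sum_(j < N | P j) (j == b) = P b)%N.
Proof.
rewrite big_mkcond (bigD1 b) //= eqxx big1 ?addn0; first by case: (P b).
by move=> j /negbTE ->; case: (P j).
Qed.

Lemma sched_pairE a b i j : sched_pair a b (i, j) = ((i == a) * (j == b))%N.
Proof. by rewrite ffunE xpair_eqE; case: (i == a); rewrite ?mul1n. Qed.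

Lemma total_use_add x y : total_use (sched_add x y) = (total_use x + total_use y)%N.
Proof.
rewrite /total_use -big_split; apply: eq_bigr => i _.
by rewrite -big_split; apply: eq_bigr => j _; rewrite ffunE.
Qed.

Lemma load_add x y i : load (sched_add x y) i = (load x i + load y i)%N.
Proof.
rewrite /load addnACA; congr (_ + _); rewrite -big_split;
  by apply: eq_bigr => j _; rewrite ffunE.
Qed.

Lemma total_use_pair (a b : 'I_N) : (a < b)%N -> total_use (sched_pair a b) = 1%N.
Proof.
move=> ab; rewrite /total_use.
under eq_bigr => i _ do under eq_bigr => j _ do rewrite sched_pairE.
under eq_bigr => i _ do rewrite -big_distrr sum_eq_cond.
by rewrite (bigD1 a) //= eqxx ab big1 // => i /negbTE ->.
Qed.

Lemma load_pair (a b i : 'I_N) :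
  (a < b)%N -> load (sched_pair a b) i = ((i == a) + (i == b))%N.
Proof.
move=> ab; rewrite /load.
under eq_bigr => j _ do rewrite sched_pairE.
rewrite [X in (_ + X)%N](eq_bigr (fun j : 'I_N => (i == a) * (j == b))%N);
  last by move=> j _; exact: sched_pairE.
rewrite -big_distrl -big_distrr !sum_eq_cond /= addnC.
have [ia|nia] := eqVneq i a; have [ib|nib] := eqVneq i b.
- by move: ab; rewrite -ia -ib ltnn.
- by rewrite ia ab muln0.
- by rewrite ib ab.
- by rewrite !muln0.
Qed.

Lemma sum_load x : (\sum_(i < N) load x i = (total_use x).*2)%N.
Proof.
rewrite /load big_split /= -addnn; congr (_ + _).
exact: (exchange_big_dep xpredT).
Qed.

Lemma load_le_total_use x i : (load x i <= total_use x)%N.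
Proof.
rewrite /load /total_use [X in (_ <= X)%N](bigD1 i) //= addnC leq_add2l.
rewrite big_mkcond (bigD1 i) //= ltnn add0n.
apply: leq_sum => k _; case: ifP => // ki.
by rewrite (bigD1 i) //= leq_addr.
Qed.

Lemma total_use_le_sum_others (S : 'I_N -> nat) x (m : 'I_N) :
  (forall i, load x i <= S i)%N -> (total_use x <= \sum_(i < N | i != m) S i)%N.
Proof.
move=> xS; rewrite -(leq_add2l (total_use x)) addnn -sum_load (bigD1 m) //=.
by rewrite leq_add ?load_le_total_use ?leq_sum.
Qed.

Lemma total_use_feasible_le B (S : 'I_N -> nat) x : (0 < N)%N -> feasible B S x ->
  (total_use x <= minn B (minn (\sum_(i < N) S i)./2
                                (\sum_(i < N) S i - \max_(i < N) S i)))%N.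
Proof.
move=> N_gt0 [_ [xB xS]].
have [m ->] : {m | \max_(i < N) S i = S m} by apply: bigop.eq_bigmax; rewrite card_ord.
rewrite !leq_min xB geq_half_double -sum_load leq_sum //=.
by rewrite (bigD1 m) //= addKn total_use_le_sum_others.
Qed.

Lemma two_largest (S : 'I_N -> nat) : (1 < N)%N ->
  exists a b : 'I_N,
    [/\ a != b, forall i, (S i <= S a)%N & forall i, i != a -> (S i <= S b)%N].
Proof.
move=> N_gt1.
have [a Sa] : {a | \max_(i < N) S i = S a}.
  by apply: bigop.eq_bigmax; rewrite card_ord ltnW.
have [i0 i0a] : exists i0 : 'I_N, i0 != a.
  have [a0|a_neq0] := eqVneq a (Ordinal (ltnW N_gt1)).
    by exists (Ordinal N_gt1); rewrite a0 -val_eqE.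
  by exists (Ordinal (ltnW N_gt1)); rewrite eq_sym.
have [b ba b_max] := @arg_maxnP _ i0 (fun i => i != a) S i0a.
by exists a, b; split; rewrite 1?eq_sym // => i; rewrite -Sa leq_bigmax.
Qed.

Lemma pair_sorted (a b : 'I_N) : a != b ->
  exists c d : 'I_N, (c < d)%N /\ forall i, ((i == c) + (i == d) = (i == a) + (i == b))%N.
Proof.
move=> ab; case: (ltngtP a b) => [lt_ab|lt_ba|eq_ab].
- by exists a, b.
- by exists b, a; split=> // i; rewrite addnC.
- by move: ab; rewrite (val_inj eq_ab) eqxx.
Qed.

Definition drop_pair (S : 'I_N -> nat) (a b i : 'I_N) : nat :=
  (S i - ((i == a) + (i == b)))%N.

Lemma sum_drop_pair (S : 'I_N -> nat) a b :
  (forall i, (i == a) + (i == b) <= S i)%N ->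
  ((\sum_(i < N) drop_pair S a b i).+2 = \sum_(i < N) S i)%N.
Proof.
move=> cover; rewrite -[RHS](eq_bigr _ (fun i _ => subnK (cover i))).
by rewrite !big_split /= !sum_eq_cond addn2.
Qed.

Lemma demand_drop_pair K (S : 'I_N -> nat) : (1 < N)%N ->
  (K.+1.*2 <= \sum_(i < N) S i)%N -> (forall i, K.+1 + S i <= \sum_(j < N) S j)%N ->
  exists a b : 'I_N, [/\ a != b, forall i, ((i == a) + (i == b) <= S i)%N,
    (K.*2 <= \sum_(i < N) drop_pair S a b i)%N &
    forall i, (K + drop_pair S a b i <= \sum_(j < N) drop_pair S a b j)%N].
Proof.
move=> N_gt1 sum_ge demand_ge; rewrite -!mul2n in sum_ge *.
have [a [b [ab a_max b_max]]] := two_largest S N_gt1.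
have ba : b != a by rewrite eq_sym.
have sum_three i : i != a -> i != b -> (S a + S b + S i <= \sum_(j < N) S j)%N.
  move=> ia ib; rewrite (bigD1 a) //= (bigD1 b) //= addnA leq_add2l.
  by rewrite (bigD1 i) /= ?ia ?ib ?leq_addr.
have Sb_gt0 : (0 < S b)%N.
  rewrite lt0n; apply/eqP => Sb0; have := demand_ge a.
  rewrite (bigD1 a) //= big1 ?addn0; first by lia.
  by move=> i /b_max; rewrite Sb0 leqn0 => /eqP.
have cover i : ((i == a) + (i == b) <= S i)%N.
  have [->|ia] := eqVneq i a; first by rewrite (negbTE ab) (leq_trans Sb_gt0 (a_max b)).
  by have [->|ib] := eqVneq i b.
have sumE := sum_drop_pair cover.
exists a, b.
(* lia does not accept bigops as atoms, so the two sums are abstracted. *)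
set T := \sum_(j < N) S j in demand_ge sum_ge sum_three sumE *.
set D := \sum_(j < N) drop_pair S a b j in sumE *.
clearbody T D; split=> // [|i]; first by lia.
have := demand_ge i; have := cover i; rewrite /drop_pair.
have [->|ia] := eqVneq i a; first by lia.
have [->|ib] := eqVneq i b; first by lia.
by have := sum_three i ia ib; have := b_max i ia; have := a_max i; lia.
Qed.

Lemma schedule_exists K (S : 'I_N -> nat) : (1 < N)%N ->
  (K.*2 <= \sum_(i < N) S i)%N -> (forall i, K + S i <= \sum_(j < N) S j)%N ->
  exists x, [/\ upper_triangular x, total_use x = K & forall i, (load x i <= S i)%N].
Proof.
move=> N_gt1; elim: K S => [|K IH] S sum_ge demand_ge.
  exists [ffun => 0%N]; split=> [i j _||i]; first by rewrite ffunE.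
    by rewrite /total_use big1 // => i _; rewrite big1 // => j _; rewrite ffunE.
  by rewrite /load !big1 // => j _; rewrite ffunE.
have [a [b [ab cover drop_sum_ge drop_demand_ge]]] :=
  demand_drop_pair N_gt1 sum_ge demand_ge.
have [c [d [cd cdE]]] := pair_sorted ab.
have [x [x_triu xK x_load]] := IH _ drop_sum_ge drop_demand_ge.
exists (sched_add x (sched_pair c d)); split.
- move=> i j ij; rewrite ffunE x_triu // sched_pairE.
  have [ic|] := eqVneq i c; have [jd|] := eqVneq j d => //.
  by move: ij; rewrite ic jd cd.
- by rewrite total_use_add xK total_use_pair // addn1.
- move=> i; rewrite load_add load_pair // cdE -(subnK (cover i)) leq_add2r.
  exact: x_load.
Qed.

End Schedules.

Local Open Scope ring_scope.

Lemma convex_combination_le (R : numDomainType) (T : eqType) (s : seq (R * T))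
    (f : T -> R) (M : R) :
  (forall d, d \in s -> 0 <= d.1 /\ f d.2 <= M) -> \sum_(d <- s) d.1 = 1 ->
  \sum_(d <- s) d.1 * f d.2 <= M.
Proof.
move=> s_ge s1; rewrite -[M]mul1r -s1 mulr_suml !big_seq.
by apply: ler_sum => d /s_ge [d_ge fd]; apply: ler_wpM2l.
Qed.

Lemma sum_F_combination (R : realType) N (s : seq (R * {ffun 'I_N * 'I_N -> nat}))
    (c : R) (lam : 'I_N -> 'I_N -> R) :
  (forall i j, lam i j = c * \sum_(d <- s) d.1 * (d.2 (i, j))%:R) ->
  sum_F lam = c * \sum_(d <- s) d.1 * (total_use d.2)%:R.
Proof.
move=> lamE; rewrite /sum_F /total_use.
under eq_bigr => i _ do under eq_bigr => j _ do rewrite lamE.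
under eq_bigr => i _ do rewrite -mulr_sumr.
rewrite -mulr_sumr; congr (_ * _).
under eq_bigr => i _ do rewrite exchange_big /=.
rewrite exchange_big /=; apply: eq_bigr => d _.
rewrite natr_sum mulr_sumr; apply: eq_bigr => i _.
by rewrite natr_sum mulr_sumr.
Qed.

Lemma in_Lambda_schedule (R : realType) N B (S : 'I_N -> nat) (p dt : R)
    (x : {ffun 'I_N * 'I_N -> nat}) :
  feasible B S x -> in_Lambda B S p dt (fun i j => p / dt * (x (i, j))%:R).
Proof.
move=> fx; exists [:: (1, x)]; split; last split.
- by move=> d; rewrite inE => /eqP ->.
- by rewrite big_seq1.
- by move=> i j; rewrite big_seq1 mul1r.
Qed.

Theorem theorem1 (R : realType) (N : nat) (B : nat) (S : 'I_N -> nat)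
    (p dt : R) :
  (2 <= N)%N -> 0 <= p -> p <= 1 -> 0 < dt ->
  let Ssum := (\sum_(i < N) S i)%N in
  let Smax := (\max_(i < N) S i)%N in
  let v := p / dt * (minn B (minn Ssum./2 (Ssum - Smax)))%:R in
  (exists lam, in_Lambda B S p dt lam /\ sum_F lam = v) /\
  (forall lam, in_Lambda B S p dt lam -> sum_F lam <= v).
Proof.
move=> N_ge2 p_ge0 _ dt_gt0 Ssum Smax v.
have pdt_ge0 : 0 <= p / dt by rewrite divr_ge0 // ltW.
set M := minn B (minn Ssum./2 (Ssum - Smax)).
split.
- have M_le_half : (M.*2 <= Ssum)%N.
    by rewrite -geq_half_double (leq_trans (geq_minr _ _)) ?geq_minl.
  have M_demand i : (M + S i <= Ssum)%N.
    have : (S i <= Smax)%N by apply: bigop.leq_bigmax.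
    have : (S i <= Ssum)%N by rewrite /Ssum (bigD1 i) //= leq_addr.
    rewrite /M; lia.
  have [x [x_triu xM x_load]] := schedule_exists N_ge2 M_le_half M_demand.
  have fx : feasible B S x by split=> //; split=> //; rewrite xM geq_minl.
  exists (fun i j => p / dt * (x (i, j))%:R); split; first exact: in_Lambda_schedule.
  by rewrite (@sum_F_combination _ _ [:: (1, x)] (p / dt)) => [|i j];
    rewrite big_seq1 mul1r ?xM.
- move=> lam [s [s_ge [s1 lamE]]].
  rewrite (sum_F_combination lamE) /v ler_wpM2l //.
  apply: (convex_combination_le (f := fun x => (total_use x)%:R)) => // d /s_ge [d_ge fd].
  by split=> //; rewrite ler_nat total_use_feasible_le // ltnW.
Qed.
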